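(* The sequence $\nu=(\nu_k)_{k\in\mathbb N}$ is bounded from above if and only if there exists a $\mathcal{KL}_{\rm gen}$-$\operatorname{Fin}(X^{\rm in})$ upper bound $(\gamma,\theta)$ for $(X^{\rm in},T,\varphi)$. If moreover $G^{>}_\nu\neq\emptyset$, then $(\gamma,\theta)$ can be chosen useful for $\nu$.
   Context: Standing data: a nonempty set $X^{\rm in}\subseteq\mathbb R^d$, a map $T:\mathbb R^d\to\mathbb R^d$ ($T^k$ its $k$-fold composition, $T^0=\mathrm{Id}$), $\varphi:\mathbb R^d\to\mathbb R$ with $\varphi(0)=0$; $\nu_k=\sup_{x\in X^{\rm in}}\varphi(T^k(x))$, assumed finite for every $k$. $G^{>}_\nu=\{k:\nu_k>\limsup_n\nu_n\}$. For $f:\mathbb R^d\to\mathbb R\cup\{+\infty\}$, $\overline f:=\sup_{x\in X^{\rm in}}f(x)$; $\operatorname{Fin}(X^{\rm in})=\{f:\mathbb R^d\to\mathbb R\cup\{+\infty\}:\overline f<+\infty\}$. $\mathcal{KL}_{\rm gen}$ is the set of functions $\gamma:\mathbb R\times\mathbb R_+\to\mathbb R$ such that $s\mapsto\gamma(s,t)$ is (not necessarily strictly) increasing for every $t\ge0$ and $t\mapsto\gamma(s,t)$ is (not necessarily strictly) decreasing for every $s\in\mathbb R$. A pair $(\gamma,\theta)\in\mathcal{KL}_{\rm gen}\times\operatorname{Fin}(X^{\rm in})$ is a $\mathcal{KL}_{\rm gen}$-$\operatorname{Fin}(X^{\rm in})$ upper bound for $(X^{\rm in},T,\varphi)$ if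 $\varphi(T^k(x))\le\gamma(\theta(x),k)$ for all $k\in\mathbb N$, $x\in X^{\rm in}$; it is useful for $\nu$ (when $G^{>}_\nu\ne\emptyset$) if $\{k\in G^{>}_\nu:\inf_{t\ge0}\gamma(\overline\theta,t)<\nu_k\}\neq\emptyset$. *)

From mathcomp Require Import all_boot all_order all_algebra.
From mathcomp Require Import all_classical all_reals all_analysis.
Set Implicit Arguments. Unset Strict Implicit. Unset Printing Implicit Defensive.
Import Order.TTheory GRing.Theory Num.Theory.
Local Open Scope classical_set_scope.
Local Open Scope ring_scope.

Section Defs.
Variables (R : realType) (d : nat).
Variables (Xin : set 'rV[R]_d) (T : 'rV[R]_d -> 'rV[R]_d) (phi : 'rV[R]_d -> R).

Definition nu (k : nat) : R := sup [set phi (iter k T x) | x in Xin].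

Definition nu_limsup : \bar R := limn_esup (fun n => (nu n)%:E).

Definition Ggt : set nat := [set k | nu_limsup < (nu k)%:E]%E.

Definition fbar (f : 'rV[R]_d -> \bar R) : \bar R := ereal_sup [set f x | x in Xin].

Definition Fin (f : 'rV[R]_d -> \bar R) : Prop :=
  (forall x, f x != -oo%E) /\ (fbar f < +oo)%E.

(* KL_gen, for gamma : R x R_+ -> R (values at t < 0 irrelevant) *)
Definition KLgen (gamma : R -> R -> R) : Prop :=
  (forall t, 0 <= t -> forall s1 s2, s1 <= s2 -> gamma s1 t <= gamma s2 t) /\
  (forall s t1 t2, 0 <= t1 -> t1 <= t2 -> gamma s t2 <= gamma s t1).

(* (gamma, theta) is a KL_gen-Fin(Xin) upper bound for (Xin, T, phi);
   theta x is finite for x in Xin when theta is in Fin(Xin), so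
   gamma (theta x) k is read as gamma (fine (theta x)) k. *)
Definition KLFin_upper_bound (gamma : R -> R -> R) (theta : 'rV[R]_d -> \bar R) : Prop :=
  KLgen gamma /\ Fin theta /\
  forall (k : nat) x, Xin x -> phi (iter k T x) <= gamma (fine (theta x)) k%:R.

Local Notation lt := (@Order.lt _ (\bar R)).
Definition useful (gamma : R -> R -> R) (theta : 'rV[R]_d -> \bar R) : Prop :=
  exists k, Ggt k /\
    lt (ereal_inf [set (gamma (fine (fbar theta)) t)%:E | t in [set t : R | 0 <= t]])
       (nu k)%:E.

End Defs.

From mathcomp Require Import all_boot all_order all_algebra.
From mathcomp Require Import all_classical all_reals all_analysis.
From mathcomp Require Import lra.
Import Order.TTheory GRing.Theory Num.Theory.
Local Open Scope classical_set_scope.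
Local Open Scope ring_scope.

(* If nu is bounded by M, the constant gamma = M with theta = 0 is a bound;
   conversely, the monotonicity of gamma in both arguments gives
   nu_k <= gamma(theta bar, 0) for every k.  For usefulness, pick c strictly
   between limsup nu and nu_k0: then nu_n < c for n >= N, and the step function
   of time equal to a bound M >= c of nu_0, ..., nu_(N-1) before N and to c
   afterwards is a KL_gen bound whose infimum over time is c < nu_k0. *)

Lemma lte_fin_dense {R : realFieldType} [x : \bar R] [y : R] :
  (x < y%:E)%E -> exists2 c : R, (x < c%:E)%E & c < y.
Proof.
case: x => [x | | ] //= xy.
- by exists ((x + y) / 2); rewrite ?lte_fin in xy *; lra.
- by exists (y - 1); [exact: ltNyr | lra].
Qed.

Lemma limn_esup_lt {R : realType} [u : (\bar R)^nat] [c : \bar R] :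
  (limn_esup u < c)%E -> exists N, forall n, (N <= n)%N -> (u n < c)%E.
Proof.
rewrite /limn_esup /limf_esup => /ereal_inf_lt [_ [V [N _ VN] <-]] Vc.
exists N => n Nn; apply: le_lt_trans Vc.
by apply: ereal_sup_ubound; exists n => //; apply: VN.
Qed.

Lemma bounded_prefix {R : realDomainType} (u : nat -> R) (N : nat) (c : R) :
  exists2 M, c <= M & forall n, (n < N)%N -> u n <= M.
Proof.
exists (\big[Order.max/c]_(j < N) u j); first by apply/bigmax_geP; left.
by move=> n nN; exact: (le_bigmax _ (fun j : 'I_N => u j) (Ordinal nN)).
Qed.

Definition step_fun {R : numDomainType} (N : nat) (M c : R) (t : R) : R :=
  if t < N%:R then M else c.

Lemma step_fun_nonincreasing {R : realDomainType} (N : nat) (M c : R) :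
  c <= M -> forall t1 t2, t1 <= t2 -> step_fun N M c t2 <= step_fun N M c t1.
Proof.
rewrite /step_fun => cM t1 t2 t12.
case: ifP => t2N; first by rewrite (le_lt_trans t12 t2N).
by case: ifP.
Qed.

Section KLFinBounds.
Variables (R : realType) (d : nat).
Variables (Xin : set 'rV[R]_d) (T : 'rV[R]_d -> 'rV[R]_d) (phi : 'rV[R]_d -> R).
Hypothesis Xin_neq0 : Xin !=set0.
Hypothesis orbit_ub : forall k : nat, has_ubound [set phi (iter k T x) | x in Xin].

Lemma phi_le_nu k x : Xin x -> phi (iter k T x) <= nu Xin T phi k.
Proof. by move=> Xx; apply: ub_le_sup (orbit_ub k) _ _; exists x. Qed.

Lemma fbar_cst (c : \bar R) : fbar Xin (cst c) = c.
Proof. by apply: ereal_sup_cst; apply/set0P. Qed.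

Lemma Fin_cst (c : R) : Fin Xin (cst c%:E).
Proof. by split=> //; rewrite fbar_cst ltry. Qed.

Lemma Fin_fin_num [theta : 'rV[R]_d -> \bar R] [x] :
  Fin Xin theta -> Xin x -> theta x \is a fin_num.
Proof.
move=> [theta_neqNy fbar_lty] Xx.
have theta_le : (theta x <= fbar Xin theta)%E by apply: ereal_sup_ubound; exists x.
by rewrite fin_numE theta_neqNy lt_eqF // (le_lt_trans theta_le fbar_lty).
Qed.

Lemma Fin_fbar_fin_num (theta : 'rV[R]_d -> \bar R) :
  Fin Xin theta -> fbar Xin theta \is a fin_num.
Proof.
move=> Fin_theta; have [x Xx] := Xin_neq0; have [_ fbar_lty] := Fin_theta.
have theta_le : (theta x <= fbar Xin theta)%E by apply: ereal_sup_ubound; exists x.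
rewrite fin_numE (lt_eqF fbar_lty) andbT.
apply/eqP => fbarNy; move: (Fin_fin_num Fin_theta Xx).
by move: theta_le; rewrite fbarNy leeNy_eq => /eqP ->.
Qed.

Lemma nu_le_KLFin_bound gamma theta k :
  KLFin_upper_bound Xin T phi gamma theta ->
  nu Xin T phi k <= gamma (fine (fbar Xin theta)) 0.
Proof.
move=> [[gamma_incr gamma_decr] [Fin_theta bound]].
apply: ge_sup; first by have [x Xx] := Xin_neq0; exists (phi (iter k T x)), x.
move=> _ [x Xx <-]; apply: le_trans (bound k x Xx) _.
apply: le_trans (gamma_decr _ 0 k%:R _ _) _ => //.
apply: gamma_incr => //; rewrite -lee_fin.
rewrite !fineK ?Fin_fbar_fin_num ?(Fin_fin_num Fin_theta) //.
by apply: ereal_sup_ubound; exists x.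
Qed.

Lemma KLFin_upper_bound_of_time_bound (g : R -> R) :
  (forall t1 t2, 0 <= t1 -> t1 <= t2 -> g t2 <= g t1) ->
  (forall k : nat, nu Xin T phi k <= g k%:R) ->
  KLFin_upper_bound Xin T phi (fun _ => g) (cst 0%E).
Proof.
move=> g_decr nu_le; split; last split.
- by split=> // *; apply: g_decr.
- exact: Fin_cst.
- by move=> k x Xx; apply: le_trans (nu_le k); apply: phi_le_nu.
Qed.

End KLFinBounds.

Theorem mainTheorem10 (R : realType) (d : nat) (Xin : set 'rV[R]_d)
  (T : 'rV[R]_d -> 'rV[R]_d) (phi : 'rV[R]_d -> R) :
  Xin !=set0 ->
  phi 0 = 0 ->
  (forall k : nat, has_ubound [set phi (iter k T x) | x in Xin]) ->
  ((exists M : R, forall k, nu Xin T phi k <= M) <->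
     exists gamma theta, KLFin_upper_bound Xin T phi gamma theta) /\
  (Ggt Xin T phi !=set0 ->
     exists gamma theta, KLFin_upper_bound Xin T phi gamma theta /\
                         useful Xin T phi gamma theta).
Proof.
move=> Xin_neq0 _ orbit_ub; split; [split|].
- move=> [M nu_le]; exists (fun _ _ => M), (cst 0%E).
  exact: KLFin_upper_bound_of_time_bound.
- move=> [gamma [theta bound]].
  exists (gamma (fine (fbar Xin theta)) 0) => k.
  exact: nu_le_KLFin_bound.
- move=> [k0 k0_gt].
  have [c limsup_lt c_lt] := lte_fin_dense k0_gt.
  have [N nu_lt] := limn_esup_lt limsup_lt.
  have [M cM nu_le] := bounded_prefix (nu Xin T phi) N c.
  exists (fun _ => step_fun N M c), (cst 0%E); split.
    apply: KLFin_upper_bound_of_time_bound => // [t1 t2 _|k].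
      exact: step_fun_nonincreasing.
    rewrite /step_fun ltr_nat; case: ltnP => [/nu_le //|/nu_lt].
    by rewrite lte_fin => /ltW.
  exists k0; split => //; rewrite -lte_fin in c_lt; apply: le_lt_trans c_lt.
  apply: ereal_inf_lbound; exists N%:R => //=.
  by rewrite /step_fun ltxx.
Qed.
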